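(* Let $\Re$ be a commutative Krasner hyperring with identity $1\ne0$, let $\phi:L(\Re)\to L(\Re)\cup\{\emptyset\}$ be a function, and let $T$ be a proper hyperideal of $\Re$ with $\phi(T)\subseteq T$ such that $T$ is $\phi$-prime but not prime. Then $T\circ\sqrt{\phi(T)}\subseteq\phi(T)$, i.e. $t\circ a\in\phi(T)$ for all $t\in T$ and $a\in\sqrt{\phi(T)}$.
   Context: Krasner hyperring: $(\Re,\oplus)$ canonical hypergroup, $(\Re,\circ)$ commutative semigroup with identity $1\ne0$, $0$ absorbing, distributive. Hyperideals and $L(\Re)$ as usual. $\sqrt{I}=\{x: x^n\in I \text{ for some } n\ge1\}$ ($\sqrt{\emptyset}=\emptyset$). $T$ is prime if $a\circ b\in T\Rightarrow a\in T$ or $b\in T$; $T$ is $\phi$-prime if $a\circ b\in T$, $a\circ b\notin\phi(T)$ imply $a\in T$ or $b\in T$. *)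

Set Implicit Arguments.

(* A commutative Krasner hyperring with identity 1 <> 0.
   Subsets of the carrier are predicates [R -> Prop];
   [hplus x y z] means  z ∈ x ⊕ y. *)
Record KrasnerHyperring := {
  carrier :> Type;
  hplus : carrier -> carrier -> carrier -> Prop;
  hmul : carrier -> carrier -> carrier;
  hzero : carrier;
  hone : carrier;
  hopp : carrier -> carrier;
  hplus_nonempty : forall x y, exists z, hplus x y z;
  hplus_comm : forall x y z, hplus x y z -> hplus y x z;
  hplus_assoc : forall x y z w,
    (exists u, hplus x y u /\ hplus u z w) <-> (exists v, hplus y z v /\ hplus x v w);
  hplus_zero : forall x z, hplus hzero x z <-> z = x;
  hplus_opp : forall x, hplus x (hopp x) hzero;
  hplus_opp_unique : forall x y, hplus x y hzero -> y = hopp x;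
  hplus_reversible_l : forall x y z, hplus x y z -> hplus z (hopp y) x;
  hplus_reversible_r : forall x y z, hplus x y z -> hplus (hopp x) z y;
  hmul_assoc : forall x y z, hmul x (hmul y z) = hmul (hmul x y) z;
  hmul_comm : forall x y, hmul x y = hmul y x;
  hmul_one : forall x, hmul hone x = x;
  hone_neq_zero : hone <> hzero;
  hmul_zero : forall x, hmul hzero x = hzero;
  hmul_distr : forall x y z w,
    (exists u, hplus x y u /\ w = hmul z u) <-> hplus (hmul z x) (hmul z y) w
}.

Section Defs.
Context {R : KrasnerHyperring}.

Definition hyperideal (I : R -> Prop) : Prop :=
  (exists x, I x) /\
  (forall a b c, I a -> I b -> hplus R a (hopp R b) c -> I c) /\
  (forall r a, I a -> I (hmul R r a)).

Definition proper (I : R -> Prop) : Prop := exists x, ~ I x.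

Definition empty_set (I : R -> Prop) : Prop := forall x, ~ I x.

Definition subset (A B : R -> Prop) : Prop := forall x, A x -> B x.

Fixpoint hpow (x : R) (n : nat) : R :=
  match n with O => hone R | S m => hmul R x (hpow x m) end.

(* sqrt I = { x : x^n ∈ I for some n >= 1 }; sqrt ∅ = ∅ automatically *)
Definition hrad (I : R -> Prop) (x : R) : Prop :=
  exists n, 1 <= n /\ I (hpow x n).

(* φ : L(R) -> L(R) ∪ {∅}, represented by a function on subsets whose
   values on hyperideals are hyperideals or empty *)
Definition phi_map (phi : (R -> Prop) -> (R -> Prop)) : Prop :=
  forall I, hyperideal I -> hyperideal (phi I) \/ empty_set (phi I).

Definition prime_hi (T : R -> Prop) : Prop :=
  forall a b, T (hmul R a b) -> T a \/ T b.

Definition phi_prime (phi : (R -> Prop) -> (R -> Prop)) (T : R -> Prop) : Prop :=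
  forall a b, T (hmul R a b) -> ~ phi T (hmul R a b) -> T a \/ T b.
End Defs.

(* Call a, b a zero-divisor pair of T when a, b are outside T and a∘b is in T;
   such a pair exists because T is not prime, and φ-primality puts a∘b in
   φ(T).  For x ∈ T and u ∈ b ⊕ x, (a, u) is again a pair and
   a∘u ∈ a∘b ⊕ a∘x, so a∘x ∈ φ(T).  Likewise, for x, y ∈ T and u ∈ a ⊕ x,
   (u, b) is a pair and u∘y ∈ a∘y ⊕ x∘y, so T∘T ⊆ φ(T).  This handles
   s ∈ √φ(T) inside T; if s lies outside T, the last power s^k outside T
   makes (s, s^k) a pair, so again s∘T ⊆ φ(T). *)
From Stdlib Require Import Classical.
Set Implicit Arguments.

Section Hyperideals.
Context {R : KrasnerHyperring}.

Lemma hopp_involutive (x : R) : hopp R (hopp R x) = x.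
Proof.
  symmetry. apply hplus_opp_unique, hplus_comm, hplus_opp.
Qed.

Lemma hplus_mull {x y u} (z : R) :
  hplus R x y u -> hplus R (hmul R z x) (hmul R z y) (hmul R z u).
Proof. intros Hu. apply hmul_distr. exists u; auto. Qed.

Lemma hplus_mulr {x y u} (z : R) :
  hplus R x y u -> hplus R (hmul R x z) (hmul R y z) (hmul R u z).
Proof. rewrite !(hmul_comm R _ z). apply hplus_mull. Qed.

Variable I : R -> Prop.
Hypothesis hI : hyperideal I.

Lemma hyperideal_mull r {x} : I x -> I (hmul R r x).
Proof. destruct hI as [_ [_ Hmul]]. auto. Qed.

Lemma hyperideal_mulr r {x} : I x -> I (hmul R x r).
Proof. rewrite hmul_comm. apply hyperideal_mull. Qed.

Lemma hyperideal_zero : I (hzero R).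
Proof.
  pose proof hI as [[x Hx] _]. rewrite <- (hmul_zero R x).
  now apply hyperideal_mull.
Qed.

Lemma hyperideal_opp {x} : I x -> I (hopp R x).
Proof.
  intros Hx. destruct hI as [_ [Hsub _]].
  apply (Hsub (hzero R) x); auto using hyperideal_zero.
  now apply hplus_zero.
Qed.

Lemma hyperideal_hplus {x y u} : hplus R x y u -> I x -> I y -> I u.
Proof.
  intros Hu Hx Hy. destruct hI as [_ [Hsub _]].
  apply (Hsub x (hopp R y)); auto using hyperideal_opp.
  now rewrite hopp_involutive.
Qed.

Lemma hyperideal_hplus_cancel {x y u} : hplus R x y u -> I x -> I u -> I y.
Proof.
  intros Hu Hx Hxu. apply (hyperideal_hplus (hplus_reversible_r _ _ _ _ Hu));
  auto using hyperideal_opp.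
Qed.

End Hyperideals.

Section ZeroDivisorPairs.
Context {R : KrasnerHyperring}.
Variable T : R -> Prop.

Definition zero_divisor_pair (a b : R) : Prop :=
  T (hmul R a b) /\ ~ T a /\ ~ T b.

Lemma zero_divisor_pair_sym {a b} :
  zero_divisor_pair a b -> zero_divisor_pair b a.
Proof. intros [Hab [Ha Hb]]. rewrite hmul_comm in Hab. now repeat split. Qed.

Lemma not_prime_zero_divisor_pair :
  ~ prime_hi T -> exists a b, zero_divisor_pair a b.
Proof.
  intros Hnp. apply NNPP. intros Hno. apply Hnp. intros a b Hab.
  apply NNPP. intros Hor. apply Hno. exists a, b.
  repeat split; tauto.
Qed.

Hypothesis hT : hyperideal T.

Lemma zero_divisor_pair_shift {a b x u} :
  zero_divisor_pair a b -> T x -> hplus R b x u -> zero_divisor_pair a u.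
Proof.
  intros [Hab [Ha Hb]] Hx Hu. repeat split; auto.
  - apply (hyperideal_hplus hT (hplus_mull a Hu)); auto.
    now apply hyperideal_mull.
  - intros HTu. apply Hb.
    exact (hyperideal_hplus_cancel hT (hplus_comm _ _ _ _ Hu) Hx HTu).
Qed.

Lemma zero_divisor_pair_pow {a} n :
  ~ T a -> T (hpow a n) -> exists k, zero_divisor_pair a (hpow a k).
Proof.
  intros Ha. induction n as [|n IH]; simpl; intros Hn.
  - exfalso. apply Ha. rewrite <- (hmul_one R a). now apply hyperideal_mulr.
  - destruct (classic (T (hpow a n))) as [HTn|HTn]; auto.
    exists n. now repeat split.
Qed.

Variable phi : (R -> Prop) -> (R -> Prop).
Hypothesis hphi : phi_map phi.
Hypothesis hpr : phi_prime phi T.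

Lemma phi_hyperideal_of_mem {x} : phi T x -> hyperideal (phi T).
Proof.
  intros Hx. destruct (hphi hT) as [Hid|Hempty]; auto.
  exfalso. exact (Hempty x Hx).
Qed.

Lemma phi_prime_zero_divisor_pair {a b} :
  zero_divisor_pair a b -> phi T (hmul R a b).
Proof.
  intros [Hab [Ha Hb]]. apply NNPP. intros Hn.
  destruct (hpr _ _ Hab Hn); tauto.
Qed.

Lemma phi_prime_zero_divisor_mul {a b x} :
  zero_divisor_pair a b -> T x -> phi T (hmul R a x).
Proof.
  intros Hpair Hx. destruct (hplus_nonempty R b x) as [u Hu].
  pose proof (phi_prime_zero_divisor_pair Hpair) as Hab.
  pose proof (zero_divisor_pair_shift Hpair Hx Hu) as Hau_pair.
  pose proof (phi_prime_zero_divisor_pair Hau_pair) as Hau.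
  exact (hyperideal_hplus_cancel (phi_hyperideal_of_mem Hab)
           (hplus_mull a Hu) Hab Hau).
Qed.

Lemma phi_prime_not_prime_mul {x y} :
  ~ prime_hi T -> T x -> T y -> phi T (hmul R x y).
Proof.
  intros Hnp Hx Hy. destruct (not_prime_zero_divisor_pair Hnp) as [a [b Hpair]].
  destruct (hplus_nonempty R a x) as [u Hu].
  assert (Hub : zero_divisor_pair u b).
  { apply zero_divisor_pair_sym.
    exact (zero_divisor_pair_shift (zero_divisor_pair_sym Hpair) Hx Hu). }
  pose proof (phi_prime_zero_divisor_mul Hpair Hy) as Hay.
  pose proof (phi_prime_zero_divisor_mul Hub Hy) as Huy.
  exact (hyperideal_hplus_cancel (phi_hyperideal_of_mem Hay)
           (hplus_mulr y Hu) Hay Huy).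
Qed.

End ZeroDivisorPairs.

Theorem mainTheorem8 (R : KrasnerHyperring)
  (phi : (R -> Prop) -> (R -> Prop)) (T : R -> Prop) :
  phi_map phi ->
  hyperideal T -> proper T ->
  subset (phi T) T ->
  phi_prime phi T -> ~ prime_hi T ->
  forall t a, T t -> hrad (phi T) a -> phi T (hmul R t a).
Proof.
  intros hphi hT _ hsub hpr hnp t a Ht [n [_ Hn]].
  destruct (classic (T a)) as [Ha|Ha].
  - exact (phi_prime_not_prime_mul hT hphi hpr hnp Ht Ha).
  - destruct (zero_divisor_pair_pow hT n Ha (hsub _ Hn)) as [k Hpair].
    rewrite hmul_comm.
    exact (phi_prime_zero_divisor_mul hT hphi hpr Hpair Ht).
Qed.
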